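(* Let $\mathcal S,\mathcal R,\mathcal U\subset\mathbb Z^2$ be finite nonempty shapes. Suppose $X\subseteq\mathbb Z^2$ is an infinite $\mathcal S$-DDC with $m$ dots. Then there exists $t\in\mathbb Z^2$ such that the copy $\mathcal U+t$ contains at least $$\frac{m}{|\mathcal S|\cdot|\mathcal R|}\,\Delta(\mathcal S,\mathcal R)\,\Delta(\mathcal R,\mathcal U)$$ points of $X$.
   Context: Work in the square grid $\mathbb Z^2$. A shape is a finite nonempty subset of $\mathbb Z^2$. Copies of a shape $\mathcal S$ are its translates $\mathcal S+t$, $t\in\mathbb Z^2$. $|\mathcal S|$ is the number of grid points of $\mathcal S$. $\Delta(\mathcal S,\mathcal R)=\max_{t\in\mathbb Z^2}|\mathcal S\cap(\mathcal R+t)|$ is the largest intersection of $\mathcal S$ with a copy of $\mathcal R$. A finite set $Y$ of grid points (''dots'') is a distinct difference configuration (DDC) if the vectors $y-y'$, over ordered pairs $(y,y')$ of distinct points of $Y$, are pairwise distinct. Equivalently, all lines joining pairs of dots differ in length or slope. A set $X\subseteq\mathbb Z^2$ is an infinite $\mathcal S$-DDC with $m$ dots if for every $t\in\mathbb Z^2$ the set $X\cap(\mathcal S+t)$ has exactly $m$ elements and is a DDC. *)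

From HB Require Import structures.
From mathcomp Require Import all_boot all_order all_algebra.
Set Implicit Arguments. Unset Strict Implicit. Unset Printing Implicit Defensive.
Import Order.TTheory GRing.Theory Num.Theory.
Local Open Scope ring_scope.

Definition point := (int * int)%type.
Definition padd (p q : point) : point := (p.1 + q.1, p.2 + q.2).
Definition psub (p q : point) : point := (p.1 - q.1, p.2 - q.2).

(* A shape is represented by a duplicate-free nonempty list of its points
   (hypotheses [uniq S] and [S != [::]] are added in the theorem).
   |S| = size S. *)

Definition inter_card (S R : seq point) (t : point) : nat :=
  count (fun s => psub s t \in R) S.

(* Delta(S,R) = max_t |S ∩ (R+t)|.  Only translates t = s - r with s in S,
   r in R can give a nonzero intersection, so the max over all t equals the
   max over this finite set of candidates (and is 0 if it is empty). *)
Definition Delta (S R : seq point) : nat :=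
  \max_(s <- S) \max_(r <- R) inter_card S R (psub s r).

Definition is_DDC (Y : point -> bool) : Prop :=
  forall y1 y2 y3 y4 : point, Y y1 -> Y y2 -> Y y3 -> Y y4 ->
    y1 != y2 -> y3 != y4 -> psub y1 y2 = psub y3 y4 -> y1 = y3 /\ y2 = y4.

Definition in_copy (X : point -> bool) (S : seq point) (t : point) : point -> bool :=
  fun p => X p && (psub p t \in S).

Definition copy_card (X : point -> bool) (S : seq point) (t : point) : nat :=
  count (fun s => X (padd s t)) S.

Definition infinite_DDC (S : seq point) (X : point -> bool) (m : nat) : Prop :=
  forall t : point, copy_card X S t = m /\ is_DDC (in_copy X S t).

From HB Require Import structures.
From mathcomp Require Import all_boot all_order all_algebra.
Import Order.TTheory GRing.Theory Num.Theory.
Local Open Scope ring_scope.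

(* The bound follows from a double-counting / averaging
   argument. Double counting: summing |X ∩ (U + s)| over s in S counts the pairs
      (s, u) in S x U with s + u in X, hence equals the sum over u in U of
      |X ∩ (S + u)| = m, i.e. m |U|.
   2. Averaging: some s in S therefore has |S| |X ∩ (U + s)| >= m |U|.
   3. Trivial bounds: Delta(S, R) <= |R| and Delta(R, U) <= |U|, since a
      translate of a duplicate-free shape meets R in at most |R| points.
   Combining, m Delta(S,R) Delta(R,U) / (|S| |R|) <= m |U| / |S|
   <= |X ∩ (U + s)|. *)

Lemma paddC (p q : point) : padd p q = padd q p.
Proof. by rewrite /padd addrC [p.2 + _]addrC. Qed.

Lemma psub_inj (t : point) : injective (psub^~ t).
Proof. by move=> [a b] [c d] [/subIr -> /subIr ->]. Qed.

Lemma count_sum_indicator (T : Type) (a : pred T) (s : seq T) :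
  count a s = (\sum_(x <- s) a x)%N.
Proof. by elim: s => [|x s IH]; rewrite ?big_nil ?big_cons //= IH. Qed.

Lemma sum_copy_card_swap (X : point -> bool) (S U : seq point) :
  (\sum_(s <- S) copy_card X U s = \sum_(u <- U) copy_card X S u)%N.
Proof.
rewrite /copy_card.
under eq_bigr => s _ do rewrite count_sum_indicator.
rewrite exchange_big /=; apply: eq_bigr => u _.
by rewrite count_sum_indicator; apply: eq_bigr => s _; rewrite paddC.
Qed.

Lemma sum_copy_card_DDC (S U : seq point) (X : point -> bool) (m : nat) :
  infinite_DDC S X m -> (\sum_(s <- S) copy_card X U s = m * size U)%N.
Proof.
move=> HX; rewrite sum_copy_card_swap.
under eq_bigr => u _ do rewrite (proj1 (HX u)).
by rewrite big_const_seq count_predT iter_addn_0 mulnC.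
Qed.

Lemma exists_ge_average (T : eqType) (c : T -> nat) (s : seq T) : s != [::] ->
  exists2 x, x \in s & (\sum_(y <- s) c y <= size s * c x)%N.
Proof.
elim: s => [//|x [|y s] IH] _.
  by exists x; rewrite ?inE ?big_seq1 ?mul1n.
have [z zs Hz] := IH isT.
have [le_xz | lt_zx] := leqP (c x) (c z).
  exists z; first by rewrite inE zs orbT.
  by rewrite big_cons [size _]/= mulSn leq_add.
exists x; first by rewrite inE eqxx.
by rewrite big_cons [size _]/= mulSn leq_add2l (leq_trans Hz) // leq_mul2l ltnW ?orbT.
Qed.

Lemma inter_card_le_size (S R : seq point) (t : point) :
  uniq S -> (inter_card S R t <= size R)%N.
Proof.
move=> uS; rewrite /inter_card -size_filter -(size_map (psub^~ t)).
apply: uniq_leq_size; first by rewrite map_inj_uniq ?filter_uniq //; exact: psub_inj.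
by move=> x /mapP [s]; rewrite mem_filter => /andP [sR _] ->.
Qed.

Lemma Delta_le_size (S R : seq point) : uniq S -> (Delta S R <= size R)%N.
Proof.
move=> uS; apply/bigmax_leqP_seq => s _ _.
by apply/bigmax_leqP_seq => r _ _; exact: inter_card_le_size.
Qed.

Theorem mainTheorem8 (S R U : seq point) (X : point -> bool) (m : nat) :
  uniq S -> S != [::] -> uniq R -> R != [::] -> uniq U -> U != [::] ->
  infinite_DDC S X m ->
  exists t : point,
    (m%:R / ((size S)%:R * (size R)%:R)) * (Delta S R)%:R * (Delta R U)%:R
      <= (copy_card X U t)%:R :> rat.
Proof.
move=> uS nS uR nR _ _ HX.
have [t _ avg_t] := @exists_ge_average _ (copy_card X U) S nS.
rewrite (sum_copy_card_DDC _ U _ _ HX) in avg_t.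
exists t.
have SR_gt0 : (0 < size S * size R)%N by rewrite muln_gt0 !lt0n !size_eq0 nS nR.
(* m Delta(S,R) Delta(R,U) <= m |R| |U| <= |R| |S| |X ∩ (U + t)|. *)
have bound : (m * Delta S R * Delta R U <= copy_card X U t * (size S * size R))%N.
  apply: (@leq_trans (size R * (m * size U))%N).
    rewrite -mulnA [(size R * _)%N]mulnCA leq_mul2l.
    by rewrite leq_mul ?Delta_le_size ?orbT.
  rewrite (mulnC (size S)) (mulnCA (copy_card X U t)) leq_mul2l.
  by rewrite (mulnC _ (size S)) avg_t orbT.
rewrite -!mulrA mulrCA mulrC ler_pdivrMr; last by rewrite -natrM ltr0n.
by rewrite -!natrM ler_nat mulnA.
Qed.
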